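(* Let $n\ge 1$ be odd. Consider the generalized $n$-gene repressilator system $$\dot r_i = a_i(p_{i-1}) - d_{r_i}(r_i),\qquad \dot p_i = k_i(r_i) - d_{p_i}(p_i),\qquad i=1,\dots,n,$$ (indices mod $n$), with functions satisfying the standing assumptions in the context, and let $E_C=(r_1^*,\dots,r_n^*,p_1^*,\dots,p_n^* )\in(0,\infty)^{2n}$ be its (central) steady state. If $\mathcal{D} > |\mathcal{K}|$, where $\mathcal{D}$ and $\mathcal{K}$ are evaluated at $E_C$, then $E_C$ is locally asymptotically stable.
   Context: Standing assumptions: each $a_i:[0,\infty)\to\mathbb{R}$ is $C^1$, nonnegative, strictly decreasing, with $a_i(0)>0$; each $d_{r_i}, d_{p_i}, k_i:[0,\infty)\to\mathbb{R}$ is $C^1$, vanishes at $0$, and is strictly increasing on $(0,\infty)$. At the steady state define $\partial_i^R := d_{r_i}'(r_i^* )$, $\partial_i^P := d_{p_i}'(p_i^* )$, $\mathcal{D}:=\prod_{i=1}^n \partial_i^R\partial_i^P$, $\mathcal{K}_i := k_i'(r_i^* )\,a_i'(p_{i-1}^* )$, and $\mathcal{K}:=\prod_{i=1}^n\mathcal{K}_i$. A steady state is called (locally asymptotically) stable if every eigenvalue of the Jacobian matrix at it has negative real part. *)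

From HB Require Import structures.
From mathcomp Require Import all_boot all_order all_algebra.
From mathcomp Require Import all_classical all_reals all_analysis.
From mathcomp Require Import complex.
Set Implicit Arguments. Unset Strict Implicit. Unset Printing Implicit Defensive.
Import Order.TTheory GRing.Theory Num.Theory.
Import numFieldNormedType.Exports.
Local Open Scope ring_scope.
Local Open Scope classical_set_scope.

Definition prevI (n : nat) (i : 'I_n) : 'I_n := ord_pred i.

Definition C1_nonneg (R : realType) (f : R -> R) : Prop :=
  {within [set x : R | 0 <= x], continuous f} /\
  (forall x : R, 0 < x -> derivable f x 1) /\
  (forall x : R, 0 < x -> {for x, continuous (derive1 f)}).

Definition repression_fun (R : realType) (a : R -> R) : Prop :=
  C1_nonneg a /\ (forall x, 0 <= x -> 0 <= a x) /\
  (forall x y, 0 <= x -> x < y -> a y < a x) /\ 0 < a 0.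

Definition incr_std_fun (R : realType) (f : R -> R) : Prop :=
  C1_nonneg f /\ f 0 = 0 /\ (forall x y, 0 < x -> x < y -> f x < f y).

(* The state vector is (r_1,...,r_n,p_1,...,p_n) in 'rV_(n + n):
   the r-block is lsubmx, the p-block is rsubmx. *)
Definition repressilator_field (R : realType) (n : nat)
  (a dr dp k : 'I_n -> R -> R) (x : 'rV[R]_(n + n)) : 'rV[R]_(n + n) :=
  row_mx (\row_i (a i (rsubmx x 0 (prevI i)) - dr i (lsubmx x 0 i)))
         (\row_i (k i (lsubmx x 0 i) - dp i (rsubmx x 0 i))).

(* The Jacobian used in the statement is MathComp-Analysis' [jacobian]
   (derive.v): jacobian F x = lin1_mx ('d F x), i.e. the matrix of the
   differential in the row-vector convention (transpose of the textbook
   Jacobian; same eigenvalues). *)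

(* (Local asymptotic) stability: every (complex) eigenvalue of the
   Jacobian has negative real part. *)
Definition all_eigen_neg_re (R : realType) (m : nat) (A : 'M[R]_m) : Prop :=
  forall z : R[i], eigenvalue (map_mx (real_complex R) A) z -> Re z < 0.

Definition is_steady_state (R : realType) (m : nat) (F : 'rV[R]_m -> 'rV[R]_m)
  (x : 'rV[R]_m) : Prop := F x = 0.

From HB Require Import structures.
From mathcomp Require Import all_boot all_order all_algebra.
From mathcomp Require Import all_classical all_reals all_analysis.
From mathcomp Require Import complex.
Import Order.TTheory GRing.Theory Num.Theory.
Import numFieldNormedType.Exports.
Local Open Scope ring_scope.

(* Write an eigenvector of the linearisation as (r, p), with eigenvalue z.
   Its equations read (z + ∂_i^R) r_i = a_i' p_{i-1} and (z + ∂_i^P) p_i = k_i' r_i.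
   If Re z >= 0 then |z + t| >= t for every t >= 0, so taking moduli and
   multiplying over the whole cycle gives D * prod |r_i| |p_i| <= |K| * prod |r_i| |p_i|.
   As D > |K|, some r_i vanishes, and the two equations carry this zero from i
   to i + 1 all around the cycle, so the eigenvector is zero. *)

Lemma ordS_closed_all n (P : 'I_n -> Prop) (i0 : 'I_n) :
  P i0 -> (forall i, P i -> P (ordS i)) -> forall j, P j.
Proof.
move=> Pi0 PS j.
have P_iter k : P (iter k (@ordS n) i0) by elim: k => //= k; apply: PS.
have val_iter k : val (iter k (@ordS n) i0) = ((i0 + k) %% n)%N.
  elim: k => [|k IH] /=; first by rewrite addn0 modn_small.
  by rewrite IH -addn1 modnDml addn1 addnS.
suff -> : j = iter (j + n - i0) (@ordS n) i0 by [].
apply: val_inj; rewrite val_iter subnKC ?modnDr ?modn_small //.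
by rewrite (leq_trans (ltnW (ltn_ord i0))) ?leq_addl.
Qed.

(* Row-vector convention, as for [jacobian]: the r-block comes first and the
   lower-left block carries a_l' in row [prevI l], column [l]. *)
Definition repressilator_jacobian_mx {T : comPzRingType} {n : nat}
    (dr dp dk da : 'I_n -> T) : 'M[T]_(n + n) :=
  block_mx (diag_mx (\row_l - dr l)) (diag_mx (\row_l dk l))
    (\matrix_(i, l) (if i == prevI l then da l else 0)) (diag_mx (\row_l - dp l)).

Section RepressilatorJacobianMx.
Variables (T : comPzRingType) (n : nat) (dr dp dk da : 'I_n -> T).
Local Notation J := (repressilator_jacobian_mx dr dp dk da).

Lemma mul_repressilator_jacobian_mx_lshift (v : 'rV[T]_(n + n)) l :
  (v *m J) 0 (lshift n l) =
  v 0 (rshift n (prevI l)) * da l - v 0 (lshift n l) * dr l.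
Proof.
rewrite -{1}[v]hsubmxK mul_row_block row_mxEl !mul_mx_diag !mxE.
rewrite (bigD1 (prevI l)) //= big1 => [|i /negbTE ne_i]; last by rewrite !mxE ne_i mulr0.
by rewrite !mxE eqxx addr0 mulrN addrC.
Qed.

Lemma mul_repressilator_jacobian_mx_rshift (v : 'rV[T]_(n + n)) l :
  (v *m J) 0 (rshift n l) = v 0 (lshift n l) * dk l - v 0 (rshift n l) * dp l.
Proof.
by rewrite -{1}[v]hsubmxK mul_row_block row_mxEr !mul_mx_diag !mxE mulrN.
Qed.

Lemma map_repressilator_jacobian_mx (T' : comPzRingType) (f : {rmorphism T -> T'}) :
  map_mx f J = repressilator_jacobian_mx (f \o dr) (f \o dp) (f \o dk) (f \o da).
Proof.
rewrite map_block_mx !map_diag_mx; congr block_mx;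
  apply/matrixP => i j; rewrite !mxE /=; try case: ifP => _;
  by rewrite ?rmorphN ?rmorph0.
Qed.

End RepressilatorJacobianMx.

Lemma Re_ge0_ler_normD (C : numClosedFieldType) (z t : C) :
  0 <= 'Re z -> 0 <= t -> t <= `|z + t|.
Proof.
move=> Re_z t_ge0; apply: le_trans (leif_Re_Creal _).1.
have Re_t : 'Re t = t by apply/Creal_ReP/ger0_real.
by rewrite raddfD /= Re_t lerDr.
Qed.

Section EigenvectorVanishes.
Context {C : numClosedFieldType} {n : nat} {dr dp dk da : 'I_n -> C}.
Hypotheses (dr_ge0 : forall l, 0 <= dr l) (dp_ge0 : forall l, 0 <= dp l).
Hypothesis gain_lt : `|\prod_l (dk l * da l)| < \prod_l (dr l * dp l).
Context {z : C} {w : 'rV[C]_(n + n)}.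
Hypothesis eigen_w : w *m repressilator_jacobian_mx dr dp dk da = z *: w.
Hypothesis Re_z_ge0 : 0 <= 'Re z.

Let r l := w 0 (lshift n l).
Let p l := w 0 (rshift n l).

Lemma eigen_eq_r l : (z + dr l) * r l = da l * p (prevI l).
Proof.
move/rowP/(_ (lshift n l)): eigen_w.
rewrite mul_repressilator_jacobian_mx_lshift !mxE => eq_l.
by rewrite mulrDl -eq_l [_ * r l]mulrC subrK mulrC.
Qed.

Lemma eigen_eq_p l : (z + dp l) * p l = dk l * r l.
Proof.
move/rowP/(_ (rshift n l)): eigen_w.
rewrite mul_repressilator_jacobian_mx_rshift !mxE => eq_l.
by rewrite mulrDl -eq_l [_ * p l]mulrC subrK mulrC.
Qed.

Lemma degradation_gt0 l : 0 < dr l /\ 0 < dp l.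
Proof.
have : dr l * dp l != 0.
  apply/eqP => h; move: gain_lt.
  rewrite [X in _ < X](bigD1 l) //= h mul0r.
  by move/(le_lt_trans (normr_ge0 _)); rewrite ltxx.
by rewrite mulf_eq0 negb_or !lt0r dr_ge0 dp_ge0 => /andP[-> ->].
Qed.

Lemma prod_norm_le :
  \prod_l (dr l * dp l) * (\prod_l `|r l| * \prod_l `|p l|) <=
  `|\prod_l (dk l * da l)| * (\prod_l `|r l| * \prod_l `|p l|).
Proof.
have le_r l : dr l * `|r l| <= `|da l| * `|p (prevI l)|.
  by rewrite -normrM -eigen_eq_r normrM ler_wpM2r ?Re_ge0_ler_normD.
have le_p l : dp l * `|p l| <= `|dk l| * `|r l|.
  by rewrite -normrM -eigen_eq_p normrM ler_wpM2r ?Re_ge0_ler_normD.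
have prod_p : \prod_l `|p (prevI l)| = \prod_l `|p l|.
  by rewrite /prevI -(reindex_inj (P := predT) (F := fun l => `|p l|) (@ord_pred_inj n)).
have -> : \prod_l (dr l * dp l) * (\prod_l `|r l| * \prod_l `|p l|) =
    \prod_l ((dr l * `|r l|) * (dp l * `|p l|)).
  by rewrite !big_split /= mulrACA.
have -> : `|\prod_l (dk l * da l)| * (\prod_l `|r l| * \prod_l `|p l|) =
    \prod_l ((`|da l| * `|p (prevI l)|) * (`|dk l| * `|r l|)).
  rewrite normr_prod (eq_bigr _ (fun l _ => normrM _ _)) !big_split /= prod_p.
  by rewrite [LHS]mulrACA [LHS]mulrC.
apply: ler_prod => l _; apply/andP; split.
  by rewrite !mulr_ge0 ?dr_ge0 ?dp_ge0.
by apply: ler_pM; rewrite ?mulr_ge0 ?dr_ge0 ?dp_ge0.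
Qed.

Lemma zD_neq0 {t : C} : 0 < t -> z + t != 0.
Proof.
move=> t_gt0; rewrite -normr_gt0 (lt_le_trans t_gt0) //.
by rewrite Re_ge0_ler_normD // ltW.
Qed.

Lemma p_eq0_of_r_eq0 l : r l = 0 -> p l = 0.
Proof.
move=> r_l0; have /eqP := eigen_eq_p l; rewrite r_l0 mulr0 mulf_eq0.
by rewrite (negbTE (zD_neq0 (degradation_gt0 l).2)) => /eqP.
Qed.

Lemma r_succ_eq0_of_p_eq0 l : p l = 0 -> r (ordS l) = 0.
Proof.
move=> p_l0; have /eqP := eigen_eq_r (ordS l); rewrite /prevI ordSK p_l0 mulr0.
by rewrite mulf_eq0 (negbTE (zD_neq0 (degradation_gt0 _).1)) => /eqP.
Qed.

Lemma exists_r_eq0 : exists l, r l = 0.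
Proof.
set P := \prod_l `|r l| * \prod_l `|p l|.
have : P == 0.
  apply: contraT => P_neq0.
  have P_gt0 : 0 < P by rewrite lt0r P_neq0 mulr_ge0 ?prodr_ge0.
  move: prod_norm_le; rewrite ler_pM2r // => /(lt_le_trans gain_lt).
  by rewrite ltxx.
rewrite mulf_eq0 => /orP[] /prodf_eq0 [l _]; rewrite normr_eq0 => /eqP eq0_l.
  by exists l.
by exists (ordS l); apply: r_succ_eq0_of_p_eq0.
Qed.

Lemma eigenvector_eq0 : w = 0.
Proof.
have [l0 r_l0] := exists_r_eq0.
have r_eq0 : forall l, r l = 0.
  apply: (ordS_closed_all _ (fun l => r l = 0) l0 r_l0) => l /p_eq0_of_r_eq0.
  exact: r_succ_eq0_of_p_eq0.
apply/rowP => j; rewrite mxE -(splitK j); case: (fintype.split j) => l /=.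
  exact: r_eq0.
exact/p_eq0_of_r_eq0/r_eq0.
Qed.

End EigenvectorVanishes.

Local Open Scope complex_scope.

Lemma normc_real (R : rcfType) (x : R) : `|x%:C| = `|x|%:C.
Proof. by rewrite normc_def /= expr0n addr0 sqrtr_sqr. Qed.

Lemma repressilator_jacobian_mx_stable (R : realType) n (dr dp dk da : 'I_n -> R) :
  (forall l, 0 <= dr l) -> (forall l, 0 <= dp l) ->
  `|\prod_l (dk l * da l)| < \prod_l (dr l * dp l) ->
  all_eigen_neg_re (repressilator_jacobian_mx dr dp dk da).
Proof.
move=> dr_ge0 dp_ge0 gain_lt z /eigenvalueP [w].
rewrite map_repressilator_jacobian_mx => eigen_w w_neq0.
rewrite real_ltNge ?Creal_Re ?real0 //; apply: contra w_neq0 => Re_z_ge0.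
apply/eqP/(eigenvector_eq0 _ _ _ eigen_w Re_z_ge0) => [l|l|] /=; rewrite ?ler0c //.
by rewrite -!(eq_bigr _ (fun l _ => rmorphM _ _ _)) -!rmorph_prod normc_real ltcR.
Qed.

Local Close Scope complex_scope.

Lemma differentiable_row_coord (R : realType) (V : normedModType R) p
    (G : V -> 'rV[R]_p) x :
  (forall j, differentiable (fun y => G y 0 j) x) -> differentiable G x.
Proof.
move=> G_diff.
have -> : G = \sum_(j < p) (fun y => G y 0 j *: delta_mx 0 j).
  by rewrite fct_sumE; apply/funext => y; rewrite [LHS]row_sum_delta.
by apply: differentiable_sum => j; apply: differentiableZl.
Qed.

Lemma differentiable_comp_coord (R : realType) m (g : R -> R) (x : 'rV[R]_m) c :
  derivable g (x 0 c) 1 -> differentiable (fun y : 'rV[R]_m => g (y 0 c)) x.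
Proof.
move=> g_der; apply: (differentiable_comp (f := fun y : 'rV[R]_m => y 0 c)).
  exact: differentiable_coord.
exact/derivable1_diffP.
Qed.

Lemma derive_comp_coord (R : realType) m (g : R -> R) (x v : 'rV[R]_m) c :
  derivable g (x 0 c) 1 ->
  'D_v (fun y : 'rV[R]_m => g (y 0 c)) x = v 0 c * derive1 g (x 0 c).
Proof.
move=> g_der.
have -> : 'D_v (fun y : 'rV[R]_m => g (y 0 c)) x = 'D_(v 0 c) g (x 0 c).
  have shift_coord : (fun h : R => h^-1 *: (g ((shift x (h *: v)) 0 c) - g (x 0 c)))
      = (fun h : R => h^-1 *: (g (shift (x 0 c) (h *: v 0 c)) - g (x 0 c))).
    by apply/funext => h /=; rewrite !mxE.
  by rewrite /derive /comp shift_coord.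
rewrite deriveE; last exact/derivable1_diffP.
rewrite derive1E'; last exact/derivable1_diffP.
by rewrite -[in LHS](mulr1 (v 0 c)) linearZZ.
Qed.

Lemma incr_std_fun_derive1_ge0 (R : realType) (f : R -> R) x :
  incr_std_fun f -> 0 < x -> 0 <= derive1 f x.
Proof.
move=> [[_ [f_der _]] [_ f_incr]] x_gt0.
apply: (@incr_derive1_ge0_itvy _ f false 0).
- by move=> y; rewrite inE /= in_itv /= andbT; apply: f_der.
- by move=> y z; rewrite !in_itv /= !andbT => y_gt0 _; apply: f_incr.
- by rewrite in_itv /= andbT.
Qed.

Section RepressilatorField.
Variables (R : realType) (n : nat) (a dr dp k : 'I_n -> R -> R).
Local Notation F := (repressilator_field a dr dp k).

Lemma repressilator_field_lshift l :
  (fun y => F y 0 (lshift n l)) =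
  (fun y => a l (y 0 (rshift n (prevI l))) - dr l (y 0 (lshift n l))).
Proof. by apply/funext => y; rewrite /repressilator_field row_mxEl !mxE. Qed.

Lemma repressilator_field_rshift l :
  (fun y => F y 0 (rshift n l)) =
  (fun y => k l (y 0 (lshift n l)) - dp l (y 0 (rshift n l))).
Proof. by apply/funext => y; rewrite /repressilator_field row_mxEr !mxE. Qed.

Variables (rs ps : 'rV[R]_n).
Hypotheses (a_der : forall l, derivable (a l) (ps 0 (prevI l)) 1)
  (dr_der : forall l, derivable (dr l) (rs 0 l) 1)
  (dp_der : forall l, derivable (dp l) (ps 0 l) 1)
  (k_der : forall l, derivable (k l) (rs 0 l) 1).

Let x := row_mx rs ps.
Let x_lshift l : x 0 (lshift n l) = rs 0 l. Proof. exact: row_mxEl. Qed.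
Let x_rshift l : x 0 (rshift n l) = ps 0 l. Proof. exact: row_mxEr. Qed.

Lemma differentiable_repressilator_field : differentiable F x.
Proof.
apply: differentiable_row_coord => j; rewrite -(splitK j).
case: (fintype.split j) => l /=.
  by rewrite repressilator_field_lshift; apply: differentiableB;
    apply: differentiable_comp_coord; rewrite ?x_lshift ?x_rshift.
by rewrite repressilator_field_rshift; apply: differentiableB;
  apply: differentiable_comp_coord; rewrite ?x_lshift ?x_rshift.
Qed.

Lemma derive_repressilator_field v :
  'D_v F x = v *m repressilator_jacobian_mx
    (fun l => derive1 (dr l) (rs 0 l)) (fun l => derive1 (dp l) (ps 0 l))
    (fun l => derive1 (k l) (rs 0 l)) (fun l => derive1 (a l) (ps 0 (prevI l))).
Proof.
rewrite derive_mx; last exact/diff_derivable/differentiable_repressilator_field.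
apply/rowP => j; rewrite mxE -(splitK j); case: (fintype.split j) => l /=.
  rewrite repressilator_field_lshift mul_repressilator_jacobian_mx_lshift deriveB.
  - by rewrite !derive_comp_coord ?x_lshift ?x_rshift.
  - by apply/diff_derivable/differentiable_comp_coord; rewrite x_rshift.
  - by apply/diff_derivable/differentiable_comp_coord; rewrite x_lshift.
rewrite repressilator_field_rshift mul_repressilator_jacobian_mx_rshift deriveB.
- by rewrite !derive_comp_coord ?x_lshift ?x_rshift.
- by apply/diff_derivable/differentiable_comp_coord; rewrite x_lshift.
- by apply/diff_derivable/differentiable_comp_coord; rewrite x_rshift.
Qed.

Lemma jacobian_repressilator_field :
  jacobian F x = repressilator_jacobian_mx
    (fun l => derive1 (dr l) (rs 0 l)) (fun l => derive1 (dp l) (ps 0 l))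
    (fun l => derive1 (k l) (rs 0 l)) (fun l => derive1 (a l) (ps 0 (prevI l))).
Proof.
apply/row_matrixP => i; rewrite !rowE -derive_repressilator_field.
by rewrite (deriveEjacobian _ differentiable_repressilator_field).
Qed.

End RepressilatorField.

Theorem proposition5 (R : realType) (n : nat) (a dr dp k : 'I_n -> R -> R)
  (rs ps : 'rV[R]_n) :
  (0 < n)%N -> odd n ->
  (forall i, repression_fun (a i)) ->
  (forall i, incr_std_fun (dr i)) ->
  (forall i, incr_std_fun (dp i)) ->
  (forall i, incr_std_fun (k i)) ->
  (forall i, 0 < rs 0 i) -> (forall i, 0 < ps 0 i) ->
  is_steady_state (repressilator_field a dr dp k) (row_mx rs ps) ->
  let D := \prod_(i < n) (derive1 (dr i) (rs 0 i) * derive1 (dp i) (ps 0 i)) in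
  let K := \prod_(i < n) (derive1 (k i) (rs 0 i) * derive1 (a i) (ps 0 (prevI i))) in
  `|K| < D ->
  all_eigen_neg_re (jacobian (repressilator_field a dr dp k) (row_mx rs ps)).
Proof.
move=> _ _ a_rep dr_incr dp_incr k_incr rs_gt0 ps_gt0 _ D K gain_lt.
have C1_der (f : R -> R) y : C1_nonneg f -> 0 < y -> derivable f y 1.
  by move=> [_ [f_der _]] /f_der.
rewrite jacobian_repressilator_field.
- apply: repressilator_jacobian_mx_stable => // l; exact: incr_std_fun_derive1_ge0.
- by move=> l; apply: C1_der (a_rep l).1 (ps_gt0 _).
- by move=> l; apply: C1_der (dr_incr l).1 (rs_gt0 _).
- by move=> l; apply: C1_der (dp_incr l).1 (ps_gt0 _).
- by move=> l; apply: C1_der (k_incr l).1 (rs_gt0 _).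
Qed.
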